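(* Let $G$ be a compact abelian group with discrete dual group $\Gamma$, let $N \in \mathbb{N}$ and $E \subset \Gamma$. If $E$ is independent and $\mathbb{Z}_N \subset \operatorname{range}(\gamma)$ for all $\gamma \in E$, then $E$ is $N$-PR.
   Context: Characters are written multiplicatively; $\mathbb{Z}_N$ is identified with the $N$-th roots of unity in the unit circle $\mathbb{T}$, and $\operatorname{range}(\gamma) = \gamma(G)$. A set $E$ of characters is independent if whenever $\gamma_1,\dots,\gamma_k \in E$ are distinct, $m_i \in \mathbb{Z}$ and $\prod_i \gamma_i^{m_i} = 1$, then $\gamma_i^{m_i} = 1$ for all $i$. A subset $E \subset \Gamma$ is $N$-PR if for every function $\varphi: E \to \mathbb{Z}_N$ there exists $x \in G$ with $\varphi(\gamma) = \gamma(x)$ for all $\gamma \in E$. *)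

From HB Require Import structures.
From mathcomp Require Import all_boot all_order all_algebra.
From mathcomp Require Import all_classical all_reals all_analysis.
Set Implicit Arguments. Unset Strict Implicit. Unset Printing Implicit Defensive.
Import Order.TTheory GRing.Theory Num.Theory.
Import numFieldNormedType.Exports.
Local Open Scope ring_scope.
Local Open Scope classical_set_scope.

(* The circle group T is represented inside C = R * R (with the product
   topology); complex multiplication written out on pairs. *)
Section Circle.
Variable R : realType.

Definition cmul (z w : R * R) : R * R :=
  (z.1 * w.1 - z.2 * w.2, z.1 * w.2 + z.2 * w.1).
Definition cone : R * R := (1, 0).
(* complex conjugate = inverse on the unit circle *)
Definition cconj (z : R * R) : R * R := (z.1, - z.2).
Definition cexpn (z : R * R) (n : nat) : R * R := iter n (cmul z) cone.
Definition cexpz (z : R * R) (m : int) : R * R :=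
  match m with
  | Posz n => cexpn z n
  | Negz n => cexpn (cconj z) n.+1
  end.

Definition on_circle (z : R * R) : Prop := z.1 ^+ 2 + z.2 ^+ 2 = 1.

(* Z_N identified with the N-th roots of unity in T *)
Definition unit_roots (N : nat) (z : R * R) : Prop :=
  on_circle z /\ cexpn z N = cone.
End Circle.

Section Characters.
Variables (R : realType) (G : topologicalZmodType).

(* continuous characters G -> T, i.e. the elements of the dual group Gamma *)
Definition is_character (g : G -> R * R) : Prop :=
  [/\ forall x, on_circle (g x),
      forall x y, g (x + y) = cmul (g x) (g y)
    & continuous g].

Definition independent (E : set (G -> R * R)) : Prop :=
  forall (k : nat) (g : 'I_k -> G -> R * R) (m : 'I_k -> int),
    injective g -> (forall i, E (g i)) ->
    (forall x, \big[@cmul R/cone R]_(i < k) cexpz (g i x) (m i) = cone R) ->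
    forall i x, cexpz (g i x) (m i) = cone R.

Definition N_PR (N : nat) (E : set (G -> R * R)) : Prop :=
  forall phi : (G -> R * R) -> R * R,
    (forall g, E g -> unit_roots N (phi g)) ->
    exists x : G, forall g, E g -> phi g = g x.
End Characters.

(* By compactness of G it suffices to interpolate phi on finitely many distinct
   characters g_1, ..., g_k of E.  For these, a point t of the torus T^k is of the
   form (g_i x)_i as soon as t satisfies every relation prod_i g_i^(m_i) = 1 that
   holds on G.  By independence such a relation splits into g_i^(m_i) = 1, and
   phi g_i, which lies in Z_N and hence in the range of g_i, satisfies it as well.

   The interpolation criterion is proved by induction on k inside compact
   subgroups K of G: solve for g_1 in K, then for the other characters in
   K /\ ker g_1, with targets corrected by the solution already found.  Both steps
   rest on the case of a single character g.  Its image g(K) is a closed subgroup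
   of the circle, hence finite cyclic or the whole circle, and a character h
   trivial on K /\ ker g agrees with a power of g on K.  In the cyclic case this is
   direct; when g(K) is the whole circle, h factors through a homomorphism
   R -> T that is continuous at 0, and lifting it near 0 gives a bounded locally
   additive function, which is linear. *)

From HB Require Import structures.
From mathcomp Require Import all_boot all_order all_algebra.
From mathcomp Require Import all_classical all_reals all_analysis.
From mathcomp.algebra_tactics Require Import ring lra.
Import Order.TTheory GRing.Theory Num.Theory.
Import numFieldNormedType.Exports.
Local Open Scope ring_scope.
Local Open Scope classical_set_scope.
Set Implicit Arguments. Unset Strict Implicit. Unset Printing Implicit Defensive.

Lemma floor_div_rem (R : archiRealFieldType) (a t : R) : 0 < a ->
  0 <= t - (Num.floor (t / a))%:~R * a < a.
Proof.
move=> a_gt0; have /andP [fl_le fl_gt] := floor_itv (t / a).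
rewrite subr_ge0 -ler_pdivlMr // fl_le /= ltrBlDl.
by rewrite -[a in _ + a]mul1r -mulrDl -[1]/(1%:~R) -intrD -ltr_pdivrMr.
Qed.

Section Circle.
Variable R : realType.
Implicit Types (a b t : R) (z : R * R).

Definition cis t : R * R := (cos t, sin t).
Definition twopi : R := pi *+ 2.

Lemma twopi_gt0 : 0 < twopi.
Proof. by rewrite pmulrn_lgt0 // pi_gt0. Qed.

Lemma cisD a b : cis (a + b) = cmul (cis a) (cis b).
Proof. by rewrite /cis /cmul /= cosD sinD; congr pair; ring. Qed.

Lemma cis0 : cis 0 = cone R.
Proof. by rewrite /cis cos0 sin0. Qed.

Lemma cisN a : cis (- a) = cconj (cis a).
Proof. by rewrite /cis /cconj /= cosN sinN. Qed.

Lemma on_circle_cis a : on_circle (cis a).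
Proof. exact: cos2Dsin2. Qed.

Lemma cis_addIr a b c : cis (a + c) = cis (b + c) -> cis a = cis b.
Proof. by move=> abc; rewrite -(addrK c a) -(addrK c b) !(cisD (_ + c)) abc. Qed.

Lemma cexpz_cis a m : cexpz (cis a) m = cis (m%:~R * a).
Proof.
have cexpn_cis b n : cexpn (cis b) n = cis (n%:R * b).
  elim: n => [|n IHn]; first by rewrite mul0r cis0.
  by rewrite /cexpn iterS -/(cexpn _ _) IHn -cisD mulrSr mulrDl mul1r addrC.
case: m => n; first exact: cexpn_cis.
by rewrite /cexpz -cisN cexpn_cis NegzE mulrNz mulrN mulNr.
Qed.

Lemma cis_twopi : cis twopi = cone R.
Proof. by rewrite /cis cos2pi sin2pi. Qed.

Lemma cis_intr_twopi m : cis (m%:~R * twopi) = cone R.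
Proof. by rewrite -cexpz_cis cis_twopi -cis0 cexpz_cis mulr0. Qed.

Lemma cisDintr a m : cis (a + m%:~R * twopi) = cis a.
Proof. by rewrite cisD cis_intr_twopi /cmul /=; congr pair; ring. Qed.

Lemma cos_eq1_twopi r : 0 <= r < twopi -> cos r = 1 -> r = 0.
Proof.
move=> /andP [r_ge0 r_lt] cos1.
have : cos (r / 2) ^+ 2 = 1.
  by move: cos1; rewrite {1}[r]splitr -mulr2n cos_mulr2n mulr2n; lra.
move=> /eqP; rewrite sqrf_eq1 => /orP h.
have /cos1sin0 sin_half0 : `|cos (r / 2)| = 1 by case: h => /eqP ->; rewrite ?normrN normr1.
apply/eqP; rewrite eq_le r_ge0 andbT leNgt; apply/negP => r_gt0.
have : 0 < sin (r / 2).
  apply: sin_gt0_pi; rewrite divr_gt0 //= ltr_pdivrMr //.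
  by move: r_lt; rewrite /twopi mulr2n mulr_natr mulr2n.
by rewrite sin_half0 ltxx.
Qed.

Lemma cis_eq1 t : cis t = cone R -> exists m : int, t = m%:~R * twopi.
Proof.
move=> cist; set m := Num.floor (t / twopi); exists m.
have rem_itv := floor_div_rem t twopi_gt0.
apply/eqP; rewrite -subr_eq0; apply/eqP/cos_eq1_twopi => //.
have : cis (t - m%:~R * twopi) = cone R.
  by rewrite -mulNr -intrN cisDintr.
by case.
Qed.

Lemma cis_eqP a b : cis a = cis b -> exists m : int, a = b + m%:~R * twopi.
Proof.
move=> ab; have : cis (a - b) = cone R by rewrite cisD ab -cisD subrr cis0.
by case/cis_eq1 => m abm; exists m; rewrite -abm addrC subrK.
Qed.

Lemma cis_inj_small a b : cis a = cis b -> `|a - b| < twopi -> a = b.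
Proof.
case/cis_eqP => m ->; rewrite addrC addKr normrM (gtr0_norm twopi_gt0).
rewrite -[X in _ < X]mul1r ltr_pM2r ?twopi_gt0 // -intr_norm ltrz1.
by case: m => [[|n]|n] //= _; rewrite mulr0z mul0r addr0.
Qed.

Lemma on_circle_bound z : on_circle z -> -1 <= z.1 <= 1 /\ -1 <= z.2 <= 1.
Proof.
rewrite /on_circle => z1.
have : z.1 ^+ 2 <= 1 /\ z.2 ^+ 2 <= 1 by rewrite -z1 lerDl lerDr !sqr_ge0.
by case=> ? ?; split; apply/andP; split; nra.
Qed.

Lemma cmulz1 z : cmul z (cone R) = z.
Proof. by case: z => a b; rewrite /cmul /=; congr pair; ring. Qed.

Lemma on_circle_fst1 z : on_circle z -> z.1 = 1 -> z = cone R.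
Proof.
rewrite /on_circle => zc z1; move: zc; rewrite z1 expr1n => /eqP.
rewrite -subr_eq0 addrC addKr sqrf_eq0 => /eqP z2.
by case: z z1 z2 => a b /= -> ->.
Qed.

Definition arg z : R := if 0 <= z.2 then acos z.1 else - acos z.1.

Lemma cis_arg z : on_circle z -> cis (arg z) = z.
Proof.
move=> zc; have [z1_itv _] := on_circle_bound zc.
have z1_in : z.1 \in `[-1, 1]%R by rewrite in_itv.
have sqrt_z2 : Num.sqrt (1 - z.1 ^+ 2) = `|z.2|.
  by move: zc; rewrite /on_circle => <-; rewrite addrC addKr sqrtr_sqr.
rewrite /arg; case: ifP => z2_ge0; rewrite ?cisN /cis /cconj /= acosK // sin_acos // sqrt_z2.
  by rewrite ger0_norm //; case: z {zc z1_itv z1_in sqrt_z2} z2_ge0.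
by rewrite ltr0_norm ?opprK ?ltNge ?z2_ge0 //; case: z {zc z1_itv z1_in sqrt_z2} z2_ge0.
Qed.

Lemma cis_mul_twopi_eq1 c :
  cis (c * twopi) = cone R -> exists j : int, c = j%:~R.
Proof.
by case/cis_eq1 => j cj; exists j; apply: (mulIf (lt0r_neq0 twopi_gt0)).
Qed.

End Circle.
Arguments twopi {R}.
Arguments twopi_gt0 {R}.
Arguments cis0 {R}.
Arguments cis_twopi {R}.
Arguments cis_intr_twopi {R}.

Section CircleHom.
Variables (R : realType) (V : zmodType) (f : V -> R * R).
Hypotheses (f_circle : forall x, on_circle (f x))
  (fD : forall x y, f (x + y) = cmul (f x) (f y)).

Lemma hom_cisD x y : f (x + y) = cis (arg (f x) + arg (f y)).
Proof. by rewrite fD cisD !cis_arg. Qed.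

Lemma hom0 : f 0 = cone R.
Proof.
rewrite -(cis_arg (f_circle 0)) -cis0; apply: (@cis_addIr _ _ _ (arg (f 0))).
by rewrite add0r -hom_cisD addr0 cis_arg.
Qed.

Lemma homN x : f (- x) = cconj (f x).
Proof.
rewrite -(cis_arg (f_circle (- x))) -[in RHS](cis_arg (f_circle x)) -cisN.
apply: (@cis_addIr _ _ _ (arg (f x))).
by rewrite addrC -hom_cisD addrN hom0 addNr cis0.
Qed.

Lemma homB x y : f (x - y) = cis (arg (f x) - arg (f y)).
Proof. by rewrite fD homN cisD cisN !cis_arg. Qed.

Lemma hom_mulz x m : f (x *~ m) = cexpz (f x) m.
Proof.
have hom_muln n : f (x *+ n) = cis (n%:R * arg (f x)).
  elim: n => [|n IHn]; first by rewrite mulr0n hom0 mul0r cis0.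
  by rewrite mulrS fD IHn -{1}(cis_arg (f_circle x)) -cisD mulrSr mulrDl mul1r addrC.
rewrite -[in RHS](cis_arg (f_circle x)) cexpz_cis; case: m => n; first exact: hom_muln.
by rewrite NegzE mulrNz homN hom_muln -cisN mulrNz mulNr.
Qed.

End CircleHom.

Section SetSubgroup.
Variable V : zmodType.

Definition is_subgroup (K : set V) := K 0 /\ forall x y, K x -> K y -> K (x - y).

Variables (K : set V) (K_subgroup : is_subgroup K).

Lemma subgroup0 : K 0. Proof. by case: K_subgroup. Qed.

Lemma subgroupB x y : K x -> K y -> K (x - y).
Proof. by case: K_subgroup => _; apply. Qed.

Lemma subgroupN x : K x -> K (- x).
Proof. by rewrite -sub0r; apply: subgroupB subgroup0. Qed.

Lemma subgroupD x y : K x -> K y -> K (x + y).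
Proof. by move=> Kx Ky; rewrite -[y]opprK; apply/subgroupB/subgroupN. Qed.

Lemma subgroup_mulz x m : K x -> K (x *~ m).
Proof.
move=> Kx; have Kxn n : K (x *+ n).
  elim: n => [|n IHn]; first by rewrite mulr0n; exact: subgroup0.
  by rewrite mulrS; apply: subgroupD.
by case: m => n; [exact: Kxn | rewrite NegzE mulrNz; exact/subgroupN/Kxn].
Qed.

End SetSubgroup.

Lemma closed_subgroup_real (R : realType) (A : set R) :
  is_subgroup A -> closed A -> forall p, 0 < p -> A p ->
  (forall t, A t) \/
  exists a, [/\ 0 < a, A a & forall t, A t -> exists n : int, t = n%:~R * a].
Proof.
move=> A_subgroup A_closed p p_gt0 Ap.
have A_mulz a n : A a -> A (n%:~R * a) by rewrite mulrzl; exact: subgroup_mulz.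
have [small|] := pselect (forall eps, 0 < eps -> exists a, A a /\ 0 < a < eps).
  left => t; rewrite (closure_id A).1 // => B /nbhs_ballP [eps eps_gt0 epsB].
  have [a [Aa /andP [a_gt0 a_lt]]] := small eps eps_gt0.
  exists ((Num.floor (t / a))%:~R * a); split; first exact: A_mulz.
  have /andP [rem_ge0 rem_lt] := floor_div_rem t a_gt0.
  by apply: epsB; rewrite -ball_normE /ball_ /= ger0_norm // (lt_trans rem_lt).
move=> /existsNP [eps /not_implyP [eps_gt0 /forallNP no_small]]; right.
pose P := [set a | A a /\ 0 < a].
have P_inf : has_inf P by split; [exists p | exists 0 => x [_ /ltW]].
have [a [Aa a_gt0] a_lt] := inf_adherent eps_gt0 P_inf.
have a_min b : P b -> a <= b.
  move=> [Ab b_gt0]; rewrite leNgt; apply/negP => b_lt_a.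
  apply: (no_small (a - b)); split; first exact: subgroupB.
  rewrite subr_gt0 b_lt_a ltrBlDl (lt_le_trans a_lt) // lerD2r.
  by apply: ge_inf => //; case: P_inf.
exists a; split => // t At; exists (Num.floor (t / a)); apply/eqP.
rewrite -subr_eq0; have /andP [rem_ge0 rem_lt] := floor_div_rem t a_gt0.
rewrite eq_sym eq_le rem_ge0 /= leNgt; apply/negP => rem_gt0.
have : a <= t - (Num.floor (t / a))%:~R * a.
  by apply: a_min; split => //; apply: subgroupB => //; exact: A_mulz.
by rewrite leNgt rem_lt.
Qed.

Lemma continuous_pair (T U V : topologicalType) (f1 : T -> U) (f2 : T -> V) :
  continuous f1 -> continuous f2 -> continuous (fun x => (f1 x, f2 x)).
Proof. by move=> c1 c2 x; exact: cvg_pair (c1 x) (c2 x). Qed.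

Section CircleTopology.
Variable R : realType.

Lemma continuous_cis : continuous (@cis R).
Proof. by move=> t; exact: cvg_pair (@continuous_cos R t) (@continuous_sin R t). Qed.

Lemma closed_set1_R2 (z : R * R) : closed [set z].
Proof. exact: (accessible_closed_set1 (hausdorff_accessible (@norm_hausdorff _ (R * R)%type))). Qed.

Lemma cos_near0 (d : R) : 0 < d ->
  exists2 eta, 0 < eta & forall t, `|t| < eta -> 1 - cos t < d.
Proof.
move=> d_gt0; have := @continuous_cos R 0; rewrite /continuous_at cos0.
move=> /(_ _ (nbhsx_ballx (1 : R) d d_gt0)) /nbhs_ballP [eta eta_gt0 cos_near].
exists eta => // t t_lt.
have : ball (0 : R) eta t by rewrite -ball_normE /ball_ /= sub0r normrN.
move/cos_near; rewrite /= -ball_normE /ball_ /=.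
exact: le_lt_trans (ler_norm _).
Qed.

Variable T : topologicalType.
Implicit Types f : T -> R * R.

Lemma continuous_fst f : continuous f -> continuous (fun x => (f x).1).
Proof. by move=> fc x; apply: continuous_comp; [exact: fc | exact: cvg_fst]. Qed.

Lemma continuous_snd f : continuous f -> continuous (fun x => (f x).2).
Proof. by move=> fc x; apply: continuous_comp; [exact: fc | exact: cvg_snd]. Qed.

Lemma continuous_cmul f1 f2 : continuous f1 -> continuous f2 ->
  continuous (fun x => cmul (f1 x) (f2 x)).
Proof.
move=> c1 c2; apply: continuous_pair => x; [apply: cvgB | apply: cvgD];
  by apply: cvgM; first [exact: continuous_fst | exact: continuous_snd].
Qed.

Lemma continuous_cexpz f m : continuous f -> continuous (fun x => cexpz (f x) m).
Proof.
have cexpn_cont (g : T -> R * R) n : continuous g -> continuous (fun x => cexpn (g x) n).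
  move=> gc; elim: n => [|n IHn]; first by move=> x; exact: cvg_cst.
  by rewrite /cexpn; under eq_fun do rewrite iterS -/(cexpn _ _); exact: continuous_cmul.
move=> fc; case: m => n; rewrite /cexpz; first exact: cexpn_cont.
apply/cexpn_cont/continuous_pair; first exact: continuous_fst.
by move=> x; apply: cvgN; exact: continuous_snd.
Qed.

End CircleTopology.

Lemma eq0_of_le_div_exp2 (R : archiRealFieldType) (x M : R) :
  (forall n, `|x| <= M / 2 ^+ n) -> x = 0.
Proof.
move=> x_small; apply/eqP; rewrite -normr_eq0; apply/negP => /negP x_neq0.
have x_gt0 : 0 < `|x| by rewrite lt_def x_neq0 normr_ge0.
set n := Num.Def.archi_bound (M / `|x|).
have := @upper_nthrootP R (M / `|x|) n (leqnn _).
rewrite ltr_pdivrMr // => M_lt.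
by have := x_small n; rewrite ler_pdivlMr ?exprn_gt0 // mulrC leNgt M_lt.
Qed.

Section LocallyAdditive.
Variables (R : archiRealFieldType) (f : R -> R) (eta M : R).
Hypotheses (eta_gt0 : 0 < eta)
  (fD : forall a b, `|a| < eta -> `|b| < eta -> `|a + b| < eta ->
          f (a + b) = f a + f b)
  (f_bounded : forall t, `|t| < eta -> `|f t| <= M)
  (f_half : f (eta / 2) = 0).

Let f0 : f 0 = 0.
Proof. by have := @fD 0 0; rewrite addr0 !normr0 => /(_ eta_gt0 eta_gt0 eta_gt0); lra. Qed.

Let f_muln n s : `|n%:R * s| < eta -> f (n%:R * s) = n%:R * f s.
Proof.
elim: n => [|n IHn]; first by rewrite !mul0r f0.
move=> ns_lt; have le_ns k : (k <= n.+1)%N -> `|k%:R * s| <= `|n.+1%:R * s|.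
  by move=> le_k; rewrite !normrM ler_wpM2r // !ger0_norm // ler_nat.
have s_lt : `|s| < eta by rewrite -[s]mul1r (le_lt_trans (le_ns 1%N _)).
have ns_lt' : `|n%:R * s| < eta by exact: le_lt_trans (le_ns n _) ns_lt.
have nsS : n.+1%:R * s = n%:R * s + s by rewrite mulrSr mulrDl mul1r.
by rewrite nsS in ns_lt *; rewrite fD // IHn // mulrSr mulrDl mul1r.
Qed.

Let eta2_gt0 : 0 < eta / 2. Proof. by rewrite divr_gt0. Qed.
Let eta2_lt : eta / 2 < eta. Proof. by rewrite ltr_pdivrMr // ltr_pMr // ltr1n. Qed.

Let f_dyadic n : f (eta / 2 / 2 ^+ n) = 0.
Proof.
have exp2_gt0 : (0 : R) < 2 ^+ n by rewrite exprn_gt0.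
have := @f_muln (2 ^ n)%N (eta / 2 / 2 ^+ n).
rewrite natrX mulrC divfK ?gt_eqF // ger0_norm ?(ltW eta2_gt0) // => /(_ eta2_lt).
by rewrite f_half => /esym /eqP; rewrite mulf_eq0 gt_eqF //= => /eqP.
Qed.

(* Write t = q s + r with s = eta / 2 / 2^n: f vanishes at q s, and 2^n r
   still lies where |f| <= M. *)
Let f_le_div_exp2 n t : 0 <= t < eta / 2 -> `|f t| <= M / 2 ^+ n.
Proof.
move=> /andP [t_ge0 t_lt].
have exp2_gt0 : (0 : R) < 2 ^+ n by rewrite exprn_gt0.
set s := eta / 2 / 2 ^+ n.
have s_gt0 : 0 < s by rewrite divr_gt0.
have s_le : s <= eta / 2 by rewrite ler_pdivrMr // ler_peMr ?(ltW eta2_gt0) // exprn_ege1 // ler1n.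
have /andP [r_ge0 r_lt] := floor_div_rem t s_gt0.
set q := Num.floor (t / s); set r := t - q%:~R * s.
have q_ge0 : 0 <= q by rewrite floor_ge0 divr_ge0 // ltW.
have qs_ge0 : 0 <= q%:~R * s by rewrite mulr_ge0 // ?ler0z // ltW.
have q_nat : q%:~R = (`|q|%N)%:R :> R by rewrite natr_absz ger0_norm.
have t_qr : t = q%:~R * s + r by rewrite addrC subrK.
have qs_lt : `|q%:~R * s| < eta.
  by rewrite ger0_norm // (le_lt_trans _ (lt_trans t_lt eta2_lt)) // -subr_ge0.
have r_lt' : `|r| < eta by rewrite ger0_norm // (lt_le_trans r_lt) // (le_trans s_le) // ltW.
have t_lt' : `|q%:~R * s + r| < eta by rewrite -t_qr ger0_norm // (lt_trans t_lt).
have r2_lt : `|(2 ^ n)%N%:R * r| < eta.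
  rewrite natrX ger0_norm ?mulr_ge0 ?exprn_ge0 // (lt_trans _ eta2_lt) //.
  by rewrite -ltr_pdivlMl // mulrC.
rewrite t_qr fD // q_nat f_muln -?q_nat // f_dyadic mulr0 add0r.
have := f_bounded r2_lt; rewrite f_muln // normrM natrX ger0_norm ?exprn_ge0 //.
by rewrite ler_pdivlMr // mulrC.
Qed.

Lemma locally_additive_eq0 t : `|t| < eta / 2 -> f t = 0.
Proof.
move=> t_lt; have [t_ge0|t_lt0] := leP 0 t.
  by apply: eq0_of_le_div_exp2 => n; apply: f_le_div_exp2; rewrite t_ge0 -(ger0_norm t_ge0).
have fNt : f (- t) = 0.
  apply: eq0_of_le_div_exp2 => n; apply: f_le_div_exp2.
  by rewrite oppr_ge0 ltW //= -(ltr0_norm t_lt0).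
have t_lt' : `|t| < eta by exact: lt_trans t_lt eta2_lt.
have := @fD t (- t) t_lt'; rewrite normrN subrr normr0 f0 fNt => /(_ t_lt' eta_gt0).
by rewrite addr0.
Qed.

End LocallyAdditive.

Section RealToCircle.
Variables (R : realType) (D : R -> R * R) (eta : R).
Hypotheses (D_circle : forall t, on_circle (D t))
  (DD : forall a b, D (a + b) = cmul (D a) (D b))
  (eta_gt0 : 0 < eta) (D_near0 : forall t, `|t| < eta -> 0 < (D t).1).

(* Near 0, D t lies in the right half-plane, where asin of its second
   coordinate is an argument of D t. *)
Let logD t := asin (D t).2.

Let cis_logD t : `|t| < eta -> cis (logD t) = D t.
Proof.
move=> t_lt; have [_ D2_itv] := on_circle_bound (D_circle t).
have D2_in : (D t).2 \in `[-1, 1]%R by rewrite in_itv.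
have D1_sqr : 1 - (D t).2 ^+ 2 = (D t).1 ^+ 2.
  by have := D_circle t; rewrite /on_circle => <-; ring.
rewrite /cis /logD cos_asin // asinK // D1_sqr sqrtr_sqr ger0_norm ?(ltW (D_near0 t_lt)) //.
by case: (D t).
Qed.

Let logD_bound t : `|logD t| <= pi / 2.
Proof.
have [_ D2_itv] := on_circle_bound (D_circle t).
by rewrite ler_norml asin_geNpi2 // asin_lepi2.
Qed.

Let logD_additive a b : `|a| < eta -> `|b| < eta -> `|a + b| < eta ->
  logD (a + b) = logD a + logD b.
Proof.
move=> a_lt b_lt ab_lt; apply: cis_inj_small; first by rewrite cis_logD // DD cisD !cis_logD.
apply: (le_lt_trans (ler_normB _ _)); apply: (le_lt_trans (lerD (logD_bound _) (ler_normD _ _))).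
have := logD_bound a; have := logD_bound b; have := @pi_gt0 R; have := splitr (@pi R).
by rewrite /twopi mulr2n; move: (pi / 2) => q; lra.
Qed.

Lemma hom_real_circle_local : exists c, forall t, `|t| < eta / 2 -> D t = cis (c * t).
Proof.
exists (logD (eta / 2) / (eta / 2)) => t t_lt.
have eta2_lt : eta / 2 < eta by rewrite ltr_pdivrMr // ltr_pMr // ltr1n.
set c := logD (eta / 2) / (eta / 2).
have logDc : logD t - c * t = 0.
  apply: (@locally_additive_eq0 R (fun t => logD t - c * t) eta (pi / 2 + `|c| * eta)) => //.
  - by move=> a b a_lt b_lt ab_lt; rewrite logD_additive //; ring.
  - move=> s s_lt; apply: (le_trans (ler_normB _ _)); apply: lerD => //.
    by rewrite normrM ler_wpM2l // ltW.
  by rewrite /c divfK ?subrr // gt_eqF // divr_gt0.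
by rewrite -cis_logD ?(lt_trans t_lt) //; congr cis; apply/eqP; rewrite -subr_eq0 logDc.
Qed.

Lemma hom_real_circle : exists c, forall t, D t = cis (c * t).
Proof.
have [c Dc] := hom_real_circle_local; exists c => t.
have eta2_gt0 : 0 < eta / 2 by rewrite divr_gt0.
set n := Num.Def.archi_bound (`|t| / (eta / 2)).
have n_gt : `|t| / (eta / 2) < n%:R by apply: archi_boundP; rewrite divr_ge0 // ltW.
have n_gt0 : (0 : R) < n%:R by apply: le_lt_trans n_gt; rewrite divr_ge0 // ltW.
have tn_lt : `|t / n%:R| < eta / 2.
  by rewrite normrM normfV (ger0_norm (ltW n_gt0)) ltr_pdivrMr // mulrC -ltr_pdivrMr.
have -> : t = (t / n%:R) *~ n by rewrite -mulrzr -[n%:~R]/(n%:R) divfK // gt_eqF.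
by rewrite hom_mulz // Dc // cexpz_cis; congr cis; rewrite -mulrzr; field; rewrite gt_eqF.
Qed.

End RealToCircle.

Section CompactSubgroup.
Variables (R : realType) (G : topologicalZmodType) (K : set G).
Hypotheses (K_compact : compact K) (K_subgroup : is_subgroup K).

Lemma char_ker_uniform (g h : G -> R * R) : is_character g -> is_character h ->
  (forall x, K x -> g x = cone R -> h x = cone R) ->
  forall eps, 0 < eps -> exists2 del, 0 < del &
    forall x, K x -> 1 - (g x).1 < del -> 1 - (h x).1 < eps.
Proof.
move=> [g_circle _ g_cont] [_ _ h_cont] ker_gh eps eps_gt0.
have dist1_cont (f : G -> R * R) : continuous f -> continuous (fun x => 1 - (f x).1).
  by move=> f_cont x; apply: cvgB; [exact: cvg_cst | exact: continuous_fst].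
pose u x := 1 - (g x).1.
pose C := K `&` [set x | eps <= 1 - (h x).1].
have C_compact : compact C.
  apply: compact_closedI => //.
  have -> : [set x | eps <= 1 - (h x).1] = (fun x => 1 - (h x).1) @^-1` [set y | eps <= y] by [].
  by apply: (continuous_closedP _).1; [exact: dist1_cont | exact: closed_ge].
have uC_closed : closed (u @` C).
  apply: compact_closed; first exact: Rhausdorff.
  by apply: continuous_compact => //; apply: continuous_subspaceT; exact: dist1_cont.
have uC0 : ~ (u @` C) 0.
  move=> [x [Kx hx_far] /eqP]; rewrite subr_eq0 eq_sym => /eqP gx1.
  have gx_one : g x = cone R := on_circle_fst1 (g_circle x) gx1.
  by move: hx_far; rewrite /= ker_gh // subrr leNgt eps_gt0.
have /nbhs_ballP [del del_gt0 del_ball] : nbhs (0 : R) (~` (u @` C)).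
  by apply: open_nbhs_nbhs; split => //; exact: closed_openC.
exists del => // x Kx ux_lt; rewrite ltNge; apply/negP => h_far.
have ux_ge0 : 0 <= u x by rewrite subr_ge0; case: (on_circle_bound (g_circle x)) => /andP [].
have : ball (0 : R) del (u x) by rewrite -ball_normE /ball_ /= sub0r normrN ger0_norm.
by move/del_ball; apply; exists x.
Qed.

Variable g : G -> R * R.
Hypothesis g_char : is_character g.
Let g_circle : forall x, on_circle (g x). Proof. by case: g_char. Qed.
Let gD : forall x y, g (x + y) = cmul (g x) (g y). Proof. by case: g_char. Qed.

Lemma char_image_dichotomy :
  (forall t, exists x, K x /\ g x = cis t) \/
  exists a, [/\ 0 < a, exists2 d : int, d != 0 & twopi = d%:~R * a,
     exists x1, K x1 /\ g x1 = cis a &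
     forall x, K x -> exists n : int, g x = cis (n%:~R * a)].
Proof.
pose A := [set t | exists x, K x /\ g x = cis t].
have A_closed : closed A.
  have -> : A = @cis R @^-1` (g @` K).
    by apply/seteqP; split => t [x]; [case=> Kx gx; exists x | exists x].
  apply: (continuous_closedP _).1; first exact: continuous_cis.
  apply: compact_closed; first exact: norm_hausdorff.
  by apply: continuous_compact => //; apply: continuous_subspaceT; case: g_char.
have A_subgroup : is_subgroup A.
  split; first by exists 0; rewrite cis0 hom0 //; split => //; exact: subgroup0.
  move=> a b [x [Kx gx]] [y [Ky gy]]; exists (x - y); split; first exact: subgroupB.
  by rewrite homB // !cisD !cisN !cis_arg // gx gy.
have A_twopi : A twopi by exists 0; rewrite cis_twopi hom0 //; split => //; exact: subgroup0.
have [A_full|[a [a_gt0 Aa A_cyclic]]] := closed_subgroup_real A_subgroup A_closed twopi_gt0 A_twopi.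
  by left.
right; exists a; split => //.
- have [d twopi_d] := A_cyclic _ A_twopi; exists d => //.
  by apply: contraTneq (@twopi_gt0 R) => d0; rewrite twopi_d d0 mul0r ltxx.
move=> x Kx; have [n arg_n] : exists n : int, arg (g x) = n%:~R * a.
  by apply: A_cyclic; exists x; rewrite cis_arg.
by exists n; rewrite -arg_n cis_arg.
Qed.

Lemma mem_char_image t : on_circle t ->
  (forall m : int, (forall x, K x -> cexpz (g x) m = cone R) -> cexpz t m = cone R) ->
  exists x, K x /\ g x = t.
Proof.
move=> t_circle t_rel.
have [g_onto|[a [a_gt0 [d d_neq0 twopi_d] [x1 [Kx1 gx1]] g_cyclic]]] := char_image_dichotomy.
  by have [x [Kx gx]] := g_onto (arg t); exists x; rewrite cis_arg in gx.
have : cexpz t d = cone R.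
  apply: t_rel => x Kx; have [n ->] := g_cyclic x Kx.
  by rewrite cexpz_cis -(cis_intr_twopi n) twopi_d; congr cis; ring.
rewrite -{1}(cis_arg t_circle) cexpz_cis => /cis_eq1 [k d_arg].
have arg_t : arg t = k%:~R * a.
  by apply: (@mulfI _ d%:~R); [rewrite intr_eq0 | rewrite d_arg twopi_d; ring].
exists (x1 *~ k); split; first exact: subgroup_mulz.
by rewrite hom_mulz // gx1 cexpz_cis -arg_t cis_arg.
Qed.

Variable h : G -> R * R.
Hypothesis h_char : is_character h.
Let h_circle : forall x, on_circle (h x). Proof. by case: h_char. Qed.
Let hD : forall x y, h (x + y) = cmul (h x) (h y). Proof. by case: h_char. Qed.
Hypothesis ker_gh : forall x, K x -> g x = cone R -> h x = cone R.

Lemma char_eq_of_ker x y : K x -> K y -> g x = g y -> h x = h y.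
Proof.
move=> Kx Ky gxy.
have : h (x - y) = cone R.
  by apply: ker_gh; [exact: subgroupB | rewrite homB // gxy subrr cis0].
rewrite homB // -cis0 => hxy.
by rewrite -(cis_arg (h_circle x)) -(subrK (arg (h y)) (arg (h x))) cisD hxy -cisD add0r cis_arg.
Qed.

(* h induces D t := h (X t) for any preimage X t of cis t under g, a homomorphism
   R -> T which char_ker_uniform keeps in the right half-plane near 0. *)
Lemma char_ker_onto : (forall t, exists x, K x /\ g x = cis t) ->
  exists j : int, forall x, K x -> h x = cexpz (g x) j.
Proof.
move=> g_onto; have [X KX] := choice g_onto.
pose D t := h (X t).
have D_circle t : on_circle (D t) by exact: h_circle.
have DD a b : D (a + b) = cmul (D a) (D b).
  rewrite -hD; apply: char_eq_of_ker; first by case: (KX (a + b)).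
    by apply: (subgroupD K_subgroup); [case: (KX a) | case: (KX b)].
  by rewrite gD (KX a).2 (KX b).2 (KX (a + b)).2 cisD.
have [del del_gt0 del_ker] := char_ker_uniform g_char h_char ker_gh ltr01.
have [eta eta_gt0 cos_near] := cos_near0 del_gt0.
have D_near0 t : `|t| < eta -> 0 < (D t).1.
  move=> t_lt; have [KXt gXt] := KX t.
  by have := del_ker _ KXt; rewrite gXt /= => /(_ (cos_near _ t_lt)); lra.
have [c Dc] := hom_real_circle D_circle DD eta_gt0 D_near0.
have [j cj] : exists j : int, c = j%:~R.
  apply: cis_mul_twopi_eq1; rewrite -Dc; apply: ker_gh; first by case: (KX twopi).
  by rewrite (KX twopi).2 cis_twopi.
exists j => x Kx; rewrite -[in RHS](cis_arg (g_circle x)) cexpz_cis -cj -Dc.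
by apply: char_eq_of_ker => //; [case: (KX (arg (g x))) | rewrite (KX _).2 cis_arg].
Qed.

Lemma char_ker_power : exists j : int, forall x, K x -> h x = cexpz (g x) j.
Proof.
have [|[a [a_gt0 [d d_neq0 twopi_d] [x1 [Kx1 gx1]] g_cyclic]]] := char_image_dichotomy.
  exact: char_ker_onto.
have : h (x1 *~ d) = cone R.
  by apply: ker_gh; [exact: subgroup_mulz | rewrite hom_mulz // gx1 cexpz_cis -twopi_d cis_twopi].
rewrite hom_mulz // -(cis_arg (h_circle x1)) cexpz_cis => /cis_eq1 [j d_arg].
have arg_h : arg (h x1) = j%:~R * a.
  by apply: (@mulfI _ d%:~R); [rewrite intr_eq0 | rewrite d_arg twopi_d; ring].
exists j => x Kx; have [n gx] := g_cyclic x Kx.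
have -> : h x = h (x1 *~ n).
  by apply: char_eq_of_ker; [|exact: subgroup_mulz|rewrite gx hom_mulz // gx1 cexpz_cis].
rewrite hom_mulz // -(cis_arg (h_circle x1)) arg_h gx !cexpz_cis; congr cis; ring.
Qed.

End CompactSubgroup.

Section CircleProducts.
Variable R : realType.

Definition cprod k (z : 'I_k -> R * R) (m : 'I_k -> int) : R * R :=
  \big[@cmul R/cone R]_(i < k) cexpz (z i) (m i).

Definition cons_exponents k (j : int) (m : 'I_k -> int) (i : 'I_k.+1) : int :=
  if unlift ord0 i is Some i' then m i' else j.

Lemma cprod_cis k (a : 'I_k -> R) m :
  cprod (fun i => cis (a i)) m = cis (\sum_(i < k) (m i)%:~R * a i).
Proof.
elim: k a m => [|k IHk] a m; first by rewrite /cprod !big_ord0 cis0.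
by rewrite /cprod !big_ord_recl -/(cprod _ _) IHk cexpz_cis -cisD.
Qed.

Lemma cprod_arg k (z : 'I_k -> R * R) m : (forall i, on_circle (z i)) ->
  cprod z m = cis (\sum_(i < k) (m i)%:~R * arg (z i)).
Proof. by move=> z_circle; rewrite -cprod_cis; apply: eq_bigr => i _; rewrite cis_arg. Qed.

Lemma cprod_cons k (z : 'I_k.+1 -> R * R) j m :
  cprod z (cons_exponents j m) =
  cmul (cexpz (z ord0) j) (cprod (fun i => z (lift ord0 i)) m).
Proof.
rewrite /cprod big_ord_recl /cons_exponents unlift_none; congr cmul.
by apply: eq_bigr => i _; rewrite liftK.
Qed.

Lemma cprod_eq1 k (z : 'I_k -> R * R) m :
  (forall i, cexpz (z i) (m i) = cone R) -> cprod z m = cone R.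
Proof.
move=> zm1; rewrite /cprod; apply: (big_rec (fun w => w = cone R)) => // i w _ ->.
by rewrite zm1 cmulz1.
Qed.

Lemma is_character_cprod (G : topologicalZmodType) k (g : 'I_k -> G -> R * R) m :
  (forall i, is_character (g i)) -> is_character (fun x => cprod (g^~ x) m).
Proof.
move=> g_char; have g_circle i x : on_circle (g i x) by case: (g_char i).
have gD i x y : g i (x + y) = cmul (g i x) (g i y) by case: (g_char i).
split.
- by move=> x; rewrite cprod_arg //; exact: on_circle_cis.
- move=> x y; transitivity (cprod (fun i => cis (arg (g i x) + arg (g i y))) m).
    by apply: eq_bigr => i _; rewrite hom_cisD.
  rewrite cprod_cis !cprod_arg // -cisD -big_split /=.
  by under eq_bigr do rewrite mulrDr.
elim: k g m g_char {g_circle gD} => [|k IHk] g m g_char.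
  by rewrite /cprod; under eq_fun do rewrite big_ord0; move=> x; exact: cvg_cst.
rewrite /cprod; under eq_fun do rewrite big_ord_recl.
apply: continuous_cmul; first by apply: continuous_cexpz; case: (g_char ord0).
by apply: (IHk (fun i => g (lift ord0 i))) => i; exact: g_char.
Qed.

End CircleProducts.

Section CharKernel.
Variables (R : realType) (G : topologicalZmodType) (K : set G) (g : G -> R * R).
Hypothesis g_char : is_character g.

Lemma compact_char_ker : compact K -> compact (K `&` [set x | g x = cone R]).
Proof.
move=> K_compact; apply: compact_closedI => //.
have -> : [set x | g x = cone R] = g @^-1` [set cone R] by [].
by apply: (continuous_closedP _).1; [case: g_char | exact: closed_set1_R2].
Qed.

Lemma is_subgroup_char_ker : is_subgroup K -> is_subgroup (K `&` [set x | g x = cone R]).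
Proof.
have [g_circle gD _] := g_char.
move=> K_subgroup; split; first by split; [exact: subgroup0 | exact: hom0].
move=> x y [Kx gx] [Ky gy]; split; first exact: subgroupB.
by rewrite /= homB // gx gy subrr cis0.
Qed.

End CharKernel.

Section Interpolation.
Variables (R : realType) (G : topologicalZmodType).

Section InterpolationStep.
Variables (k : nat) (K : set G) (g : 'I_k.+1 -> G -> R * R) (t : 'I_k.+1 -> R * R).
Hypotheses (K_compact : compact K) (K_subgroup : is_subgroup K)
  (g_char : forall i, is_character (g i)) (t_circle : forall i, on_circle (t i))
  (t_rel : forall m, (forall x, K x -> cprod (g^~ x) m = cone R) -> cprod t m = cone R).

Lemma interpolation_head : exists x0, K x0 /\ g ord0 x0 = t ord0.
Proof.
apply: mem_char_image => // j j_rel.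
have := @t_rel (cons_exponents j (fun=> 0)); rewrite cprod_cons cprod_eq1 // cmulz1; apply.
by move=> x Kx; rewrite cprod_cons cprod_eq1 // cmulz1 j_rel.
Qed.

(* The corrected targets t_i / g_i(x0) satisfy the relations of the g_i on
   K /\ ker g_0: by char_ker_power such a relation becomes, after a factor
   g_0^(-j), a relation on K, which t satisfies. *)
Lemma interpolation_tail_relations x0 : K x0 -> g ord0 x0 = t ord0 ->
  forall ms, (forall x, (K `&` [set x | g ord0 x = cone R]) x ->
                cprod (fun i => g (lift ord0 i) x) ms = cone R) ->
  cprod (fun i => cis (arg (t (lift ord0 i)) - arg (g (lift ord0 i) x0))) ms = cone R.
Proof.
move=> Kx0 gx0 ms ms_rel.
have g_circle i x : on_circle (g i x) by case: (g_char i).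
have [j chi_pow] := char_ker_power K_compact K_subgroup (g_char ord0)
  (is_character_cprod ms (fun i => g_char (lift ord0 i))) (fun x Kx g0x => ms_rel x (conj Kx g0x)).
have : cprod t (cons_exponents (- j) ms) = cone R.
  apply: t_rel => x Kx; rewrite cprod_cons chi_pow // -(cis_arg (g_circle ord0 x)).
  by rewrite !cexpz_cis -cisD -cis0 intrN mulNr addNr.
rewrite cprod_cons cprod_arg // -(cis_arg (t_circle ord0)) cexpz_cis -cisD => t_relj.
have := chi_pow x0 Kx0; rewrite cprod_arg // gx0 -(cis_arg (t_circle ord0)) cexpz_cis => gs_x0.
rewrite cprod_cis; under eq_bigr do rewrite mulrBr; rewrite sumrB.
by rewrite cisD cisN gs_x0 -cisN -cisD addrC -mulNr -intrN.
Qed.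

End InterpolationStep.

Lemma chars_interpolation k (K : set G) (g : 'I_k -> G -> R * R) (t : 'I_k -> R * R) :
  compact K -> is_subgroup K ->
  (forall i, is_character (g i)) -> (forall i, on_circle (t i)) ->
  (forall m, (forall x, K x -> cprod (g^~ x) m = cone R) -> cprod t m = cone R) ->
  exists2 x, K x & forall i, g i x = t i.
Proof.
elim: k K g t => [|k IHk] K g t K_compact K_subgroup g_char t_circle t_rel.
  by exists 0 => [|[]//]; exact: subgroup0.
have [x0 [Kx0 gx0]] := interpolation_head K_compact K_subgroup g_char t_circle t_rel.
have [x1 [Kx1 g0x1] gx1] := IHk _ _ _
  (compact_char_ker (g_char ord0) K_compact) (is_subgroup_char_ker (g_char ord0) K_subgroup)
  (fun i => g_char (lift ord0 i)) (fun i => on_circle_cis _)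
  (interpolation_tail_relations K_compact K_subgroup g_char t_circle t_rel Kx0 gx0).
have g_circle i x : on_circle (g i x) by case: (g_char i).
have gD i x y : g i (x + y) = cmul (g i x) (g i y) by case: (g_char i).
exists (x0 + x1) => [|i]; first exact: subgroupD.
case: (unliftP ord0 i) => [i' ->|->]; last by rewrite gD g0x1 gx0 cmulz1.
by rewrite gD gx1 -{1}[g _ x0](cis_arg (g_circle _ x0)) -cisD addrC subrK cis_arg.
Qed.

End Interpolation.

Section Pointed.
Variable G : topologicalZmodType.

(* compact_cover is stated for pointed spaces. *)
Definition pointed_zmod : Type := G.
HB.instance Definition _ := Topological.copy pointed_zmod G.
HB.instance Definition _ := isPointed.Build pointed_zmod (0 : G).

Lemma compact_cover_zmod : compact [set: G] -> cover_compact [set: pointed_zmod].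
Proof. by rewrite -compact_cover. Qed.

End Pointed.

Section IndependentInterpolation.
Variables (R : realType) (G : topologicalZmodType) (N : nat) (E : set (G -> R * R)).
Hypotheses (G_compact : compact [set: G])
  (E_chars : forall g, E g -> is_character g) (E_indep : independent E)
  (E_range : forall g, E g -> forall z, unit_roots N z -> exists x : G, g x = z).
Variable phi : (G -> R * R) -> R * R.
Hypothesis phi_roots : forall g, E g -> unit_roots N (phi g).

Lemma independent_interpolation (s : seq (G -> R * R)) :
  uniq s -> (forall g, g \in s -> E g) -> exists x, forall g, g \in s -> phi g = g x.
Proof.
move=> s_uniq sE; pose gi (i : 'I_(size s)) := nth (fun=> cone R) s i.
have gE i : E (gi i) by apply/sE/mem_nth.
have gi_inj : injective gi.
  by move=> i j /eqP; rewrite nth_uniq // => /eqP /val_inj.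
have [x _ gx] : exists2 x, [set: G] x & forall i, gi i x = phi (gi i).
  apply: chars_interpolation => //.
  - by move=> i; exact: E_chars.
  - by move=> i; case: (phi_roots (gE i)).
  move=> m m_rel; apply: cprod_eq1 => i.
  have [y <-] := E_range (gE i) (phi_roots (gE i)).
  exact: E_indep gi_inj gE (fun x => m_rel x I) i y.
exists x => g gs; have g_idx : (index g s < size s)%N by rewrite index_mem.
by have := gx (Ordinal g_idx); rewrite /gi /= nth_index.
Qed.

End IndependentInterpolation.

Theorem corollary2p3 (R : realType) (G : topologicalZmodType)
  (G_compact : compact [set: G]) (G_hausdorff : hausdorff_space G)
  (N : nat) (N_pos : (0 < N)%N) (E : set (G -> R * R))
  (E_chars : forall g, E g -> is_character g)
  (E_indep : independent E)
  (E_range : forall g, E g -> forall z, unit_roots N z -> exists x : G, g x = z) :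
  N_PR N E.
Proof.
move=> phi phi_roots; apply: contrapT => /forallNP no_x.
have E_cover : [set: G] `<=` \bigcup_(g in E) [set x | g x <> phi g].
  move=> x _; have /existsNP [g /not_implyP [Eg gx]] := no_x x.
  by exists g => // gx'; apply: gx; rewrite gx'.
have [|D DE D_cover] :=
    compact_cover_zmod G_compact (f := fun g => [set x | g x <> phi g]) _ E_cover.
  move=> g Eg; have -> : [set x | g x <> phi g] = ~` (g @^-1` [set phi g]) by [].
  apply: closed_openC; apply: (continuous_closedP _).1.
    by case: (E_chars g Eg).
  exact: closed_set1_R2.
have DE' g : g \in finmap.enum_fset D -> E g by move/DE; rewrite inE.
have [x phi_x] := independent_interpolation G_compact E_chars E_indep E_range
  phi_roots (finmap.fset_uniq D) DE'.
by have [g Dg gx] := D_cover x I; apply: gx; rewrite phi_x.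
Qed.
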